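(* Let $R$ be a unital ring and let $(P,Q,\psi)$ be a unital $R$-system satisfying Condition (FS'). Let $J\subseteq R$ be a $\psi$-compatible ideal such that (a) $1_R\in J$ and (b) $\psi$ is surjective. Then the relative Cuntz–Pimsner ring $\mathcal{O}_{(P,Q,\psi)}(J)$ is strongly $\mathbb{Z}$-graded.
   Context: A $\mathbb{Z}$-graded ring $B=\bigoplus_iB_i$ is strongly graded if $B_mB_n=B_{m+n}$ for all $m,n$. An $R$-system is a triple $(P,Q,\psi)$ with $P,Q$ $R$-bimodules and $\psi:P\otimes_RQ\to R$ an $R$-bimodule homomorphism; it is unital if $R$ is unital and $1_R$ acts as identity on both sides of $P$ and $Q$. Put $P^{\otimes0}=Q^{\otimes0}=R$, $Q^{\otimes n}=Q^{\otimes(n-1)}\otimes_RQ$, $P^{\otimes n}=P\otimes_RP^{\otimes(n-1)}$. A covariant representation of $(P,Q,\psi)$ is a tuple $(S,T,\sigma,B)$ with $B$ a ring, $S:P\to B$, $T:Q\to B$ additive, $\sigma:R\to B$ a ring homomorphism, with $S(pr)=S(p)\sigma(r)$, $S(rp)=\sigma(r)S(p)$, $T(qr)=T(q)\sigma(r)$, $T(rq)=\sigma(r)T(q)$, $\sigma(\psi(p\otimes q))=S(p)T(q)$. For $q\in Q,p\in P$ let $\theta_{q,p}(x)=q\psi(p\otimes x)$ on $Q$ and $\theta_{p,q}(y)=\psi(y\otimes q)p$ on $P$; $\mathcal{F}_P(Q)$ (resp. $\mathcal{F}_Q(P)$) is the additive group generated by all $\theta_{q,p}$ (resp. $\theta_{p,q}$).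 Condition (FS'): there exist $\Theta\in\mathcal{F}_P(Q)$, $\Phi\in\mathcal{F}_Q(P)$ fixing every element of $Q$, resp. $P$. Let $\Delta:R\to\mathrm{End}(Q_R)$, $\Delta(r)(q)=rq$. For a covariant representation there is a unique ring homomorphism $\pi_{T,S}:\mathcal{F}_P(Q)\to B$ with $\pi_{T,S}(\theta_{q,p})=T(q)S(p)$. The Toeplitz representation $(\iota_P,\iota_Q,\iota_R,\mathcal{T}_{(P,Q,\psi)})$ is the universal covariant representation (every covariant representation factors uniquely through it); it is $\mathbb{Z}$-graded with $\mathcal{T}_i$ the additive group generated by elements $\iota_Q^m(q)\iota_P^n(p)$ and $\iota_R(r)\iota_Q^m(q)\iota_P^n(p)$, $q\in Q^{\otimes m},p\in P^{\otimes n}$, $m-n=i$, where $\iota_Q^m(q_1\otimes\cdots\otimes q_m)=\iota_Q(q_1)\cdots\iota_Q(q_m)$, similarly $\iota_P^n$, and $\iota^0=\iota_R$. An ideal $J$ of $R$ is $\psi$-compatible if $\Delta(J)\subseteq\mathcal{F}_P(Q)$. For such $J$, $\mathcal{T}(J)$ is the ideal of $\mathcal{T}_{(P,Q,\psi)}$ generated by $\{\iota_R(x)-\pi_{\iota_Q,\iota_P}(\Delta(x)):x\in J\}$ and the relative Cuntz–Pimsner ring is $\mathcal{O}_{(P,Q,\psi)}(J)=\mathcal{T}_{(P,Q,\psi)}/\mathcal{T}(J)$ with the quotient grading $\mathcal{O}_i=\rho(\mathcal{T}_i)$, $\rho$ the quotient map. *)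

From HB Require Import structures.
From mathcomp Require Import all_boot all_order all_algebra.
Set Implicit Arguments. Unset Strict Implicit. Unset Printing Implicit Defensive.
Import GRing.Theory.
Local Open Scope ring_scope.

(* Rings are MathComp pzRingType (unital, possibly zero).  Homomorphisms
   between them are only required to be additive and multiplicative
   (not necessarily unit preserving), as in the paper. *)
Definition additive_map (A B : zmodType) (f : A -> B) : Prop :=
  forall x y, f (x + y) = f x + f y.

Definition ring_hom (A B : pzRingType) (f : A -> B) : Prop :=
  additive_map f /\ (forall x y, f (x * y) = f x * f y).

Definition sgn (V : zmodType) (b : bool) (v : V) : V := if b then - v else v.

Definition zspan (V : zmodType) (G : V -> Prop) (v : V) : Prop :=
  exists s : seq (bool * V),
    (forall t, t \in s -> G t.2) /\ v = \sum_(t <- s) sgn t.1 t.2.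

Definition is_ideal (R : pzRingType) (J : R -> Prop) : Prop :=
  J 0 /\ (forall x y, J x -> J y -> J (x - y)) /\
  (forall r x, J x -> J (r * x)) /\ (forall r x, J x -> J (x * r)).

Definition ideal_gen (T : pzRingType) (G : T -> Prop) (y : T) : Prop :=
  exists l : seq (T * T * T),
    (forall t, t \in l -> G t.1.2) /\ y = \sum_(t <- l) t.1.1 * t.1.2 * t.2.

(* Data of an R-system (P, Q, psi): bimodule actions and psi, where the
   bimodule map psi : P (x)_R Q -> R is given by its values psi p q on
   simple tensors (a balanced biadditive map). *)
Record Rsystem (R : pzRingType) (P Q : zmodType) := RSystem {
  lP : R -> P -> P; rP : P -> R -> P;
  lQ : R -> Q -> Q; rQ : Q -> R -> Q;
  psi : P -> Q -> R }.

Definition is_bimodule (R : pzRingType) (M : zmodType)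
  (la : R -> M -> M) (ra : M -> R -> M) : Prop :=
  (forall r x y, la r (x + y) = la r x + la r y) /\
  (forall r s x, la (r + s) x = la r x + la s x) /\
  (forall r s x, la (r * s) x = la r (la s x)) /\
  (forall r x y, ra (x + y) r = ra x r + ra y r) /\
  (forall r s x, ra x (r + s) = ra x r + ra x s) /\
  (forall r s x, ra x (r * s) = ra (ra x r) s) /\
  (forall r s x, la r (ra x s) = ra (la r x) s).

Definition is_Rsystem (R : pzRingType) (P Q : zmodType) (X : Rsystem R P Q) : Prop :=
  is_bimodule (lP X) (rP X) /\ is_bimodule (lQ X) (rQ X) /\
  (forall p p' q, psi X (p + p') q = psi X p q + psi X p' q) /\
  (forall p q q', psi X p (q + q') = psi X p q + psi X p q') /\
  (forall p r q, psi X (rP X p r) q = psi X p (lQ X r q)) /\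
  (forall r p q, psi X (lP X r p) q = r * psi X p q) /\
  (forall p q r, psi X p (rQ X q r) = psi X p q * r).

Definition unital_Rsystem (R : pzRingType) (P Q : zmodType) (X : Rsystem R P Q) : Prop :=
  (forall p, lP X 1 p = p) /\ (forall p, rP X p 1 = p) /\
  (forall q, lQ X 1 q = q) /\ (forall q, rQ X q 1 = q).

(* An element of F_P(Q), written as sum_k (+/-) theta_{q_k,p_k},
   evaluated at x: theta_{q,p}(x) = q psi(p (x) x). *)
Definition thetaQ (R : pzRingType) (P Q : zmodType) (X : Rsystem R P Q)
  (s : seq (bool * Q * P)) (x : Q) : Q :=
  \sum_(t <- s) sgn t.1.1 (rQ X t.1.2 (psi X t.2 x)).

(* An element of F_Q(P): sum_k (+/-) theta_{p_k,q_k},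
   theta_{p,q}(y) = psi(y (x) q) p. *)
Definition thetaP (R : pzRingType) (P Q : zmodType) (X : Rsystem R P Q)
  (s : seq (bool * P * Q)) (y : P) : P :=
  \sum_(t <- s) sgn t.1.1 (lP X (psi X y t.2) t.1.2).

Definition condFS' (R : pzRingType) (P Q : zmodType) (X : Rsystem R P Q) : Prop :=
  (exists s, forall x, thetaQ X s x = x) /\ (exists s, forall y, thetaP X s y = y).

(* psi surjective: every r is psi of some element of P (x)_R Q, i.e. a
   finite sum of values on simple tensors. *)
Definition psi_surjective (R : pzRingType) (P Q : zmodType) (X : Rsystem R P Q) : Prop :=
  forall r : R, exists s : seq (P * Q), r = \sum_(t <- s) psi X t.1 t.2.

(* psi-compatible ideal: Delta(J) \subseteq F_P(Q). *)
Definition psi_compatible (R : pzRingType) (P Q : zmodType) (X : Rsystem R P Q)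
  (J : R -> Prop) : Prop :=
  is_ideal J /\ forall x, J x -> exists s, forall q, lQ X x q = thetaQ X s q.

Definition covariant (R : pzRingType) (P Q : zmodType) (X : Rsystem R P Q)
  (B : pzRingType) (S : P -> B) (T : Q -> B) (sigma : R -> B) : Prop :=
  additive_map S /\ additive_map T /\ ring_hom sigma /\
  (forall p r, S (rP X p r) = S p * sigma r) /\
  (forall r p, S (lP X r p) = sigma r * S p) /\
  (forall q r, T (rQ X q r) = T q * sigma r) /\
  (forall r q, T (lQ X r q) = sigma r * T q) /\
  (forall p q, sigma (psi X p q) = S p * T q).

Definition toeplitz_universal (R : pzRingType) (P Q : zmodType) (X : Rsystem R P Q)
  (TT : pzRingType) (iP : P -> TT) (iQ : Q -> TT) (iR : R -> TT) : Prop :=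
  covariant X iP iQ iR /\
  forall (B : pzRingType) (S : P -> B) (T : Q -> B) (sigma : R -> B),
    covariant X S T sigma ->
    (exists phi : TT -> B, ring_hom phi /\ (forall p, phi (iP p) = S p) /\
        (forall q, phi (iQ q) = T q) /\ (forall r, phi (iR r) = sigma r)) /\
    (forall phi1 phi2 : TT -> B, ring_hom phi1 -> ring_hom phi2 ->
        (forall p, phi1 (iP p) = S p) -> (forall q, phi1 (iQ q) = T q) ->
        (forall r, phi1 (iR r) = sigma r) ->
        (forall p, phi2 (iP p) = S p) -> (forall q, phi2 (iQ q) = T q) ->
        (forall r, phi2 (iR r) = sigma r) ->
        forall x, phi1 x = phi2 x).

(* iota_Q^m on a simple tensor q_1 (x) ... (x) q_m; for m = 0 the
   "tensor" is an element r of R and iota^0 = iota_R. *)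
Definition iQm (R : pzRingType) (Q : zmodType) (TT : pzRingType)
  (iR : R -> TT) (iQ : Q -> TT) (r : R) (qs : seq Q) : TT :=
  if qs is [::] then iR r else \prod_(q <- qs) iQ q.

Definition iPm (R : pzRingType) (P : zmodType) (TT : pzRingType)
  (iR : R -> TT) (iP : P -> TT) (r : R) (ps : seq P) : TT :=
  if ps is [::] then iR r else \prod_(p <- ps) iP p.

Definition Tgen (R : pzRingType) (P Q : zmodType) (TT : pzRingType)
  (iP : P -> TT) (iQ : Q -> TT) (iR : R -> TT) (i : int) (x : TT) : Prop :=
  exists (qs : seq Q) (ps : seq P) (r0 r1 r2 : R),
    (size qs)%:Z - (size ps)%:Z = i /\
    (x = iQm iR iQ r1 qs * iPm iR iP r2 ps \/
     x = iR r0 * (iQm iR iQ r1 qs * iPm iR iP r2 ps)).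

Definition Tgr (R : pzRingType) (P Q : zmodType) (TT : pzRingType)
  (iP : P -> TT) (iQ : Q -> TT) (iR : R -> TT) (i : int) : TT -> Prop :=
  zspan (Tgen iP iQ iR i).

(* Generators of T(J): iota_R(x) - pi(Delta(x)), x in J, where
   Delta(x) = sum (+/-) theta_{q_k,p_k} and pi maps it to
   sum (+/-) iota_Q(q_k) iota_P(p_k) (well defined by the paper). *)
Definition TJgen (R : pzRingType) (P Q : zmodType) (X : Rsystem R P Q)
  (J : R -> Prop) (TT : pzRingType) (iP : P -> TT) (iQ : Q -> TT) (iR : R -> TT)
  (y : TT) : Prop :=
  exists (x : R) (s : seq (bool * Q * P)),
    J x /\ (forall q, lQ X x q = thetaQ X s q) /\
    y = iR x - \sum_(t <- s) sgn t.1.1 (iQ t.1.2 * iP t.2).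

Definition strongly_graded (B : pzRingType) (G : int -> B -> Prop) : Prop :=
  forall (m n : int) (y : B),
    G (m + n) y <-> zspan (fun z => exists a b, G m a /\ G n b /\ z = a * b) y.

From HB Require Import structures.
From mathcomp Require Import all_boot all_order all_algebra zify.
Import GRing.Theory.
Local Open Scope ring_scope.

(* The proof rests on a criterion valid for any Z-graded ring B: if some
   e in B_0 is a left unit for every homogeneous element and e lies in
   B_1 B_{-1} and in B_{-1} B_1, then e lies in B_m B_{-m} for every m
   (insert the decomposition of e into itself, one degree at a time), and
   hence B_{m+n} = e B_{m+n} is contained in B_m B_{-m} B_{m+n}, which is
   contained in B_m B_n.

   For O we take e = rho(iota_R(1)).  The Toeplitz components T_i are shown
   to satisfy T_m T_n <= T_{m+n} and iota_R(1) x = x for x in T_i; both pass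
   to the image grading O_i = rho(T_i).  Since 1 in J, the generator
   iota_R(1) - pi(Delta(1)) of T(J) is killed by rho, writing e as a signed
   sum of products rho(iota_Q q) rho(iota_P p) in O_1 O_{-1}; surjectivity
   of psi writes iota_R(1) as a sum of iota_P p iota_Q q, so e is in
   O_{-1} O_1. *)

Set Implicit Arguments.
Unset Strict Implicit.

Lemma addmap0 (A B : zmodType) (f : A -> B) : additive_map f -> f 0 = 0.
Proof. by move=> fD; apply: (addrI (f 0)); rewrite -fD !addr0. Qed.

Lemma addmapN (A B : zmodType) (f : A -> B) x : additive_map f -> f (- x) = - f x.
Proof. by move=> fD; apply: (addrI (f x)); rewrite -fD !subrr addmap0. Qed.

Lemma addmap_sgn (A B : zmodType) (f : A -> B) b x :
  additive_map f -> f (sgn b x) = sgn b (f x).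
Proof. by case: b => //= /addmapN. Qed.

Lemma addmap_sum (A B : zmodType) (I : Type) (f : A -> B) (s : seq I) (F : I -> A) :
  additive_map f -> f (\sum_(t <- s) F t) = \sum_(t <- s) f (F t).
Proof. by move=> fD; exact: (big_morph f fD (addmap0 fD)). Qed.

Lemma additive_mull (T : pzRingType) (a : T) : additive_map (fun z => a * z).
Proof. by move=> x y; rewrite mulrDr. Qed.

Lemma additive_mulr (T : pzRingType) (a : T) : additive_map (fun z => z * a).
Proof. by move=> x y; rewrite mulrDl. Qed.

Lemma ideal_gen_base (T : pzRingType) (G : T -> Prop) y : G y -> ideal_gen G y.
Proof.
by move=> Gy; exists [:: (1, y, 1)]; split=> [t /[!inE] /eqP-> //|]; rewrite big_seq1 mul1r mulr1.
Qed.

Section AdditiveSpan.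
Variable V : zmodType.

Lemma zspan0 (G : V -> Prop) : zspan G 0.
Proof. by exists [::]; rewrite big_nil. Qed.

Lemma zspan_gen (G : V -> Prop) v : G v -> zspan G v.
Proof. by move=> Gv; exists [:: (false, v)]; split=> [t /[!inE] /eqP-> //|]; rewrite big_seq1. Qed.

Lemma zspanD (G : V -> Prop) u v : zspan G u -> zspan G v -> zspan G (u + v).
Proof.
move=> [s [Gs ->]] [s' [Gs' ->]]; exists (s ++ s'); split; last by rewrite big_cat.
by move=> t; rewrite mem_cat => /orP[/Gs|/Gs'].
Qed.

Lemma zspanN (G : V -> Prop) v : zspan G v -> zspan G (- v).
Proof.
move=> [s [Gs ->]]; exists [seq (~~ t.1, t.2) | t <- s]; split.
  by move=> _ /mapP[t /Gs Gt ->].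
by rewrite big_map -sumrN; apply: eq_bigr => -[[] w] _ //=; rewrite opprK.
Qed.

Lemma zspan_sgn (G : V -> Prop) b v : zspan G v -> zspan G (sgn b v).
Proof. by case: b => //= /zspanN. Qed.

Lemma zspan_big (G : V -> Prop) (I : Type) (s : seq I) (F : I -> V) :
  (forall t, zspan G (F t)) -> zspan G (\sum_(t <- s) F t).
Proof. by move=> GF; apply: big_ind => //; [exact: zspan0 | exact: zspanD]. Qed.

Lemma zspan_ind (G K : V -> Prop) :
  K 0 -> (forall u w, K u -> K w -> K (u + w)) -> (forall u, K u -> K (- u)) ->
  (forall g, G g -> K g) -> forall v, zspan G v -> K v.
Proof.
move=> K0 KD KN KG _ [s [Gs ->]]; rewrite big_seq; apply: big_ind => // -[b g] /Gs /KG.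
by case: b => //= /KN.
Qed.

End AdditiveSpan.

Lemma zspan_map (V W : zmodType) (G : V -> Prop) (H : W -> Prop) (f : V -> W) v :
  additive_map f -> (forall g, G g -> zspan H (f g)) -> zspan G v -> zspan H (f v).
Proof.
move=> fD fG; apply: (zspan_ind (K := fun v => zspan H (f v))) => //.
- by rewrite /= addmap0 //; exact: zspan0.
- by move=> u w Hu Hw; rewrite /= fD; exact: zspanD.
- by move=> u Hu; rewrite /= addmapN //; exact: zspanN.
Qed.

Section StronglyGradedCriterion.
Variables (B : pzRingType) (G : int -> B -> Prop).
Hypothesis Gmul : forall m n a b, G m a -> G n b -> G (m + n) (a * b).

Definition prodspan (m n : int) : B -> Prop :=
  zspan (fun z => exists a b, G m a /\ G n b /\ z = a * b).

Lemma prodspan_mull k m n a x : G k a -> prodspan m n x -> prodspan (k + m) n (a * x).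
Proof.
move=> Ga; apply: zspan_map (additive_mull a) _ => _ [b [c [Gb [Gc ->]]]].
by apply: zspan_gen; exists (a * b), c; rewrite mulrA; split=> //; exact: Gmul.
Qed.

Lemma prodspan_mulr k m n x y : prodspan m n x -> G k y -> prodspan m (n + k) (x * y).
Proof.
move=> Hx Gy; apply: zspan_map (additive_mulr y) _ Hx => _ [a [b [Ga [Gb ->]]]].
by apply: zspan_gen; exists a, (b * y); rewrite mulrA; split=> //; split=> //; exact: Gmul.
Qed.

Variable e : B.
Hypothesis e_unit : forall i y, G i y -> e * y = y.

(* If e is in B_m B_n then B_d B_d' <= B_(d+m) B_(n+d'): write a product
   a b as a (e b) and expand e. *)
Lemma prodspan_insert m n d d' z :
  prodspan m n e -> prodspan d d' z -> prodspan (d + m) (n + d') z.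
Proof.
move=> He; apply: (zspan_ind (K := prodspan (d + m) (n + d'))).
- exact: zspan0.
- exact: zspanD.
- exact: zspanN.
- move=> _ [a [b [Ga [Gb ->]]]]; rewrite -(e_unit Gb).
  exact: prodspan_mull Ga (prodspan_mulr He Gb).
Qed.

Lemma prodspan_step m d :
  prodspan m (- m) e -> prodspan d (- d) e -> prodspan (d + m) (- (d + m)) e.
Proof. by rewrite opprD [- d + _]addrC; exact: prodspan_insert. Qed.

Hypothesis e0 : G 0 e.
Hypothesis e_pos : prodspan 1 (- 1) e.
Hypothesis e_neg : prodspan (- 1) 1 e.

Lemma prodspan_unit m : prodspan m (- m) e.
Proof.
have e00 : prodspan 0 0 e.
  by apply: zspan_gen; exists e, e; rewrite (e_unit e0).
have e_neg' : prodspan (- 1) (- - 1) e by rewrite opprK.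
case: m => k.
- elim: k => [|k IH]; first by rewrite oppr0.
  by rewrite -add1n PoszD; exact: prodspan_step IH e_pos.
- rewrite NegzE; elim: k => [|k IH]; first exact: e_neg'.
  by rewrite -add1n PoszD opprD; exact: prodspan_step IH e_neg'.
Qed.

Hypothesis G0 : forall i, G i 0.
Hypothesis GD : forall i u w, G i u -> G i w -> G i (u + w).
Hypothesis GN : forall i u, G i u -> G i (- u).

(* B_(m+n) = e B_(m+n) <= B_m B_(-m) B_(m+n) <= B_m B_n, and conversely
   B_m B_n <= B_(m+n) since each B_i is an additive subgroup. *)
Theorem strongly_graded_criterion : strongly_graded G.
Proof.
move=> m n y; split=> [Gy | ].
- have := prodspan_mulr (prodspan_unit m) Gy.
  by rewrite (e_unit Gy) addrA addNr add0r.
- apply: (zspan_ind (K := G (m + n))); [exact: G0 | exact: GD | exact: GN |].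
  by move=> _ [a [b [Ga [Gb ->]]]]; exact: Gmul.
Qed.

End StronglyGradedCriterion.

Section ToeplitzGrading.
Variables (R : pzRingType) (P Q : zmodType) (X : Rsystem R P Q).
Variables (TT : pzRingType) (iP : P -> TT) (iQ : Q -> TT) (iR : R -> TT).
Hypothesis unitalX : unital_Rsystem X.
Hypothesis covX : covariant X iP iQ iR.

Local Notation Tdeg := (Tgr iP iQ iR).
Local Notation Tgen := (Tgen iP iQ iR).
Local Notation iQs := (iQm iR iQ).
Local Notation iPs := (iPm iR iP).

Let iRD : additive_map iR. Proof. by case: covX => _ [_ [[]]]. Qed.
Let iRM x y : iR (x * y) = iR x * iR y. Proof. by case: covX => _ [_ [[_ ->]]]. Qed.
Let iP_rP p r : iP (rP X p r) = iP p * iR r. Proof. by case: covX => _ [_ [_ [->]]]. Qed.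
Let iP_lP r p : iP (lP X r p) = iR r * iP p. Proof. by case: covX => _ [_ [_ [_ [->]]]]. Qed.
Let iQ_rQ q r : iQ (rQ X q r) = iQ q * iR r.
Proof. by case: covX => _ [_ [_ [_ [_ [->]]]]]. Qed.
Let iQ_lQ r q : iQ (lQ X r q) = iR r * iQ q.
Proof. by case: covX => _ [_ [_ [_ [_ [_ [->]]]]]]. Qed.
Let iR_psi p q : iR (psi X p q) = iP p * iQ q.
Proof. by case: covX => _ [_ [_ [_ [_ [_ [_ ->]]]]]]. Qed.
Let lP1 p : lP X 1 p = p. Proof. by case: unitalX. Qed.
Let rP1 p : rP X p 1 = p. Proof. by case: unitalX => _ []. Qed.
Let lQ1 q : lQ X 1 q = q. Proof. by case: unitalX => _ [_ []]. Qed.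
Let rQ1 q : rQ X q 1 = q. Proof. by case: unitalX => _ [_ [_ ->]]. Qed.

Lemma iR1_iR r : iR 1 * iR r = iR r.
Proof. by rewrite -iRM mul1r. Qed.

(* Peeling the first letter off a nonempty word; since iota_Q(q) iota_R(1)
   = iota_Q(q), the coefficient attached to the empty word is irrelevant. *)

Lemma iQs_cons r q qs : iQs r (q :: qs) = iQ q * iQs 1 qs.
Proof. by case: qs => [|q' qs] /=; rewrite ?big_seq1 -?iQ_rQ ?rQ1 // big_cons. Qed.

Lemma iPs_cons r p ps : iPs r (p :: ps) = iP p * iPs 1 ps.
Proof. by case: ps => [|p' ps] /=; rewrite ?big_seq1 -?iP_rP ?rP1 // big_cons. Qed.

Lemma iR1_iQs r qs : iR 1 * iQs r qs = iQs r qs.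
Proof. by case: qs => [|q qs]; rewrite ?iR1_iR // iQs_cons mulrA -iQ_lQ lQ1. Qed.

Lemma iR1_iPs r ps : iR 1 * iPs r ps = iPs r ps.
Proof. by case: ps => [|p ps]; rewrite ?iR1_iR // iPs_cons mulrA -iP_lP lP1. Qed.

Lemma iQ_mul_iQs q r qs : exists qs', size qs' = (size qs).+1 /\ iQ q * iQs r qs = iQs 1 qs'.
Proof.
case: qs => [|q' qs]; last by exists [:: q, q' & qs]; split=> //=; rewrite [RHS]big_cons.
by exists [:: rQ X q r]; split=> //=; rewrite big_seq1 iQ_rQ.
Qed.

Lemma iP_mul_iPs p r ps : exists ps', size ps' = (size ps).+1 /\ iP p * iPs r ps = iPs 1 ps'.
Proof.
case: ps => [|p' ps]; last by exists [:: p, p' & ps]; split=> //=; rewrite [RHS]big_cons.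
by exists [:: rP X p r]; split=> //=; rewrite big_seq1 iP_rP.
Qed.

Lemma Tgen_mulR r i w : Tgen i w -> Tgen i (iR r * w).
Proof.
move=> [qs [ps [r0 [r1 [r2 [deg [->| ->]]]]]]]; exists qs, ps.
- by exists r, r1, r2; split=> //; right.
- by exists (r * r0), r1, r2; split=> //; right; rewrite mulrA iRM.
Qed.

Lemma Tgen_mulQ q i w : Tgen i w -> Tgen (i + 1) (iQ q * w).
Proof.
move=> [qs [ps [r0 [r1 [r2 [<- Hw]]]]]].
have [q' Ew] : exists q', iQ q * w = iQ q' * (iQs r1 qs * iPs r2 ps).
  by case: Hw => ->; [exists q | exists (rQ X q r0); rewrite mulrA iQ_rQ].
have [qs' [size_qs' Eqs']] := iQ_mul_iQs q' r1 qs.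
exists qs', ps, 0, 1, r2; split; first by rewrite size_qs'; lia.
by left; rewrite Ew mulrA Eqs'.
Qed.

Lemma Tgen_mulP p i w : Tgen i w -> Tgen (i - 1) (iP p * w).
Proof.
move=> [qs [ps [r0 [r1 [r2 [<- Hw]]]]]].
have [p' Ew] : exists p', iP p * w = iP p' * (iQs r1 qs * iPs r2 ps).
  by case: Hw => ->; [exists p | exists (rP X p r0); rewrite mulrA iP_rP].
case: qs {Hw} Ew => [|q qs] Ew.
- have [ps' [size_ps' Eps']] := iP_mul_iPs (rP X p' r1) r2 ps.
  exists [::], ps', 0, 1, 1; split; first by rewrite size_ps' /=; lia.
  by left; rewrite Ew mulrA -iP_rP Eps' /= iR1_iPs.
- exists qs, ps, (psi X p' q), 1, r2; split; first by rewrite /=; lia.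
  by right; rewrite Ew iQs_cons !mulrA -iR_psi.
Qed.

Lemma Tdeg_mul_letter (f : TT -> TT) d :
  additive_map f -> (forall i w, Tgen i w -> Tgen (i + d) (f w)) ->
  forall i y, Tdeg i y -> Tdeg (i + d) (f y).
Proof. by move=> fD fG i y; apply: zspan_map fD _ => w /fG /zspan_gen. Qed.

Lemma Tdeg_mulR r i y : Tdeg i y -> Tdeg i (iR r * y).
Proof.
move=> Ty; have := Tdeg_mul_letter (additive_mull (iR r)) (d := 0) _ Ty.
by rewrite addr0; apply=> j w; rewrite addr0; exact: Tgen_mulR.
Qed.

Lemma Tdeg_mulQ q i y : Tdeg i y -> Tdeg (i + 1) (iQ q * y).
Proof. by apply: (Tdeg_mul_letter (additive_mull (iQ q))) => j w; exact: Tgen_mulQ. Qed.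

Lemma Tdeg_mulP p i y : Tdeg i y -> Tdeg (i - 1) (iP p * y).
Proof. by apply: (Tdeg_mul_letter (additive_mull (iP p))) => j w; exact: Tgen_mulP. Qed.

Lemma Tdeg_mulQs qs r i y : Tdeg i y -> Tdeg (i + (size qs)%:Z) (iQs r qs * y).
Proof.
move=> Ty; elim: qs r => [|q qs IH] r; first by rewrite addr0; exact: Tdeg_mulR.
rewrite iQs_cons -mulrA (_ : i + (size (q :: qs))%:Z = i + (size qs)%:Z + 1); last by rewrite /=; lia.
exact: Tdeg_mulQ.
Qed.

Lemma Tdeg_mulPs ps r i y : Tdeg i y -> Tdeg (i - (size ps)%:Z) (iPs r ps * y).
Proof.
move=> Ty; elim: ps r => [|p ps IH] r; first by rewrite subr0; exact: Tdeg_mulR.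
rewrite iPs_cons -mulrA (_ : i - (size (p :: ps))%:Z = i - (size ps)%:Z - 1); last by rewrite /=; lia.
exact: Tdeg_mulP.
Qed.

Lemma Tdeg_mul m n x y : Tdeg m x -> Tdeg n y -> Tdeg (m + n) (x * y).
Proof.
move=> Tx Ty; apply: zspan_map (additive_mulr y) _ Tx.
move=> g [qs [ps [r0 [r1 [r2 [<- Hg]]]]]].
have Tw : Tdeg ((size qs)%:Z - (size ps)%:Z + n) (iQs r1 qs * iPs r2 ps * y).
  rewrite -mulrA (_ : _ + n = n - (size ps)%:Z + (size qs)%:Z); last by lia.
  exact/Tdeg_mulQs/Tdeg_mulPs.
by case: Hg => ->; last rewrite -mulrA; [exact: Tw | exact: Tdeg_mulR].
Qed.

Lemma Tdeg_unit i x : Tdeg i x -> iR 1 * x = x.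
Proof.
apply: (zspan_ind (K := fun x => iR 1 * x = x)).
- exact: mulr0.
- by move=> u w Hu Hw; rewrite mulrDr Hu Hw.
- by move=> u Hu; rewrite mulrN Hu.
- by move=> _ [qs [ps [r0 [r1 [r2 [_ [->| ->]]]]]]]; rewrite mulrA ?iR1_iQs ?iR1_iR.
Qed.

Lemma Tdeg_iR1 : Tdeg 0 (iR 1).
Proof. by apply: zspan_gen; exists [::], [::], 0, 1, 1; split=> //; left; rewrite iR1_iR. Qed.

Lemma Tdeg_iQ q : Tdeg 1 (iQ q).
Proof.
apply: zspan_gen; exists [:: q], [::], 0, 1, 1; split=> //; left.
by rewrite /= big_seq1 -iQ_rQ rQ1.
Qed.

Lemma Tdeg_iP p : Tdeg (- 1) (iP p).
Proof.
apply: zspan_gen; exists [::], [:: p], 0, 1, 1; split=> //; left.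
by rewrite /= big_seq1 -iP_lP lP1.
Qed.

Section ImageGrading.
Variables (O : pzRingType) (rho : TT -> O).
Hypothesis rhoD : additive_map rho.
Hypothesis rhoM : forall x y, rho (x * y) = rho x * rho y.

Definition Odeg (i : int) (y : O) : Prop := exists x, Tdeg i x /\ y = rho x.

Local Notation eO := (rho (iR 1)).

Lemma Odeg_iQ q : Odeg 1 (rho (iQ q)).
Proof. by exists (iQ q); split=> //; exact: Tdeg_iQ. Qed.

Lemma Odeg_iP p : Odeg (- 1) (rho (iP p)).
Proof. by exists (iP p); split=> //; exact: Tdeg_iP. Qed.

Lemma unit_in_PQ : psi_surjective X -> prodspan Odeg (- 1) 1 eO.
Proof.
move=> surj; have [s ->] := surj 1.
rewrite (addmap_sum _ _ iRD) (addmap_sum _ _ rhoD); apply: zspan_big => t.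
rewrite iR_psi rhoM; apply: zspan_gen.
by exists (rho (iP t.1)), (rho (iQ t.2)); split; [exact: Odeg_iP | split; [exact: Odeg_iQ |]].
Qed.

(* If T(J) = ker rho and 1 in J, then eO = rho(pi(Delta(1))) lies in O_1 O_{-1}. *)
Lemma unit_in_QP (J : R -> Prop) :
  psi_compatible X J -> J 1 ->
  (forall x, rho x = 0 <-> ideal_gen (TJgen X J iP iQ iR) x) ->
  prodspan Odeg 1 (- 1) eO.
Proof.
move=> [_ compJ] J1 ker; have [s Hs] := compJ 1 J1.
pose S := \sum_(t <- s) sgn t.1.1 (iQ t.1.2 * iP t.2).
have eS : eO = rho S.
  apply/eqP; rewrite -subr_eq0 -(addmapN _ rhoD) -rhoD; apply/eqP/ker/ideal_gen_base.
  by exists 1, s.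
rewrite eS (addmap_sum _ _ rhoD); apply: zspan_big => t.
rewrite (addmap_sgn _ _ rhoD) rhoM; apply/zspan_sgn/zspan_gen.
by exists (rho (iQ t.1.2)), (rho (iP t.2)); split; [exact: Odeg_iQ | split; [exact: Odeg_iP |]].
Qed.

Lemma Odeg_strongly_graded :
  prodspan Odeg 1 (- 1) eO -> prodspan Odeg (- 1) 1 eO -> strongly_graded Odeg.
Proof.
move=> e_pos e_neg; apply: (@strongly_graded_criterion _ Odeg _ eO) => //.
- by move=> m n _ _ [x [Tx ->]] [y [Ty ->]]; exists (x * y); rewrite rhoM; split=> //; exact: Tdeg_mul.
- by move=> i _ [x [Tx ->]]; rewrite -rhoM (Tdeg_unit Tx).
- by exists (iR 1); split=> //; exact: Tdeg_iR1.
- by move=> i; exists 0; rewrite addmap0 //; split=> //; exact: zspan0.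
- by move=> i _ _ [x [Tx ->]] [y [Ty ->]]; exists (x + y); rewrite rhoD; split=> //; exact: zspanD.
- by move=> i _ [x [Tx ->]]; exists (- x); rewrite addmapN //; split=> //; exact: zspanN.
Qed.

End ImageGrading.
End ToeplitzGrading.

Theorem mainTheorem5 (R : pzRingType) (P Q : zmodType) (X : Rsystem R P Q)
  (TT : pzRingType) (iP : P -> TT) (iQ : Q -> TT) (iR : R -> TT)
  (J : R -> Prop) (O : pzRingType) (rho : TT -> O) :
  is_Rsystem X -> unital_Rsystem X -> condFS' X ->
  toeplitz_universal X iP iQ iR ->
  psi_compatible X J -> J 1 -> psi_surjective X ->
  ring_hom rho -> (forall y : O, exists x, rho x = y) ->
  (forall x, rho x = 0 <-> ideal_gen (TJgen X J iP iQ iR) x) ->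
  strongly_graded (fun i (y : O) => exists x, Tgr iP iQ iR i x /\ y = rho x).
Proof.
move=> _ unitalX _ [covX _] compatJ J1 surj [rhoD rhoM] _ ker.
apply: (Odeg_strongly_graded unitalX covX rhoD rhoM).
- exact: (unit_in_QP unitalX covX rhoD rhoM compatJ J1 ker).
- exact: (unit_in_PQ unitalX covX rhoD rhoM surj).
Qed.
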